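(* In the setting below: (i) If $x\in M_1$, then $\mathcal{P}(x)\cap M\subseteq M_1$, hence $\mathcal{P}(x)\cap M=\mathcal{P}(x)\cap M_1$. In particular $\mathcal{P}(A)\cap M=M_1$. (ii) For every ordinal $\alpha\geq1$, if $x\in M_{\alpha+1}$, then $\mathcal{P}(x)\cap M\subseteq M_{\alpha+1}$, hence $\mathcal{P}(x)\cap M=\mathcal{P}(x)\cap M_{\alpha+1}$. In particular $\mathcal{P}(M_\alpha)\cap M=M_{\alpha+1}$.
   Context: Work in ZFA (ZF with a set $A$ of atoms, i.e. urelements that have no elements), extended by a primitive binary relation $\preccurlyeq$ on $A$, with Separation and Replacement holding for formulas mentioning $\preccurlyeq$. $A$ is an infinite set of atoms and $\preccurlyeq$ is a pre-ordering (reflexive, transitive) on $A$ with no minimal elements: for every $a\in A$ there is $b\in A$ with $b\preccurlyeq a$ and not $a\preccurlyeq b$. For $a\in A$, $pr(a)=\{b\in A:b\preccurlyeq a\}$; $LO(A,\preccurlyeq)$ is the set of nonempty $x\subseteq A$ with $pr(a)\subseteq x$ for all $a\in x$. For a set $X$ of sets, $LO(X,\subseteq)$ is the set of nonempty $x\subseteq X$ such that for every $y\in x$ and every $z\in X$ with $z\subseteq y$, $z\in x$. The magmatic hierarchy: $M_1=LO(A,\preccurlyeq)$; $M_{\alpha+1}=LO(M_\alpha,\subseteq)$ for $\alpha\geq1$; $M_\alpha=\bigcup_{1\leq\beta<\alpha}M_\beta$ for limit $\alpha$; $M=\bigcup_{\alpha\geq1}M_\alpha$. *)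

From Stdlib Require Import List Wellfounded.

Record ZFA_sig := {
  V :> Type;
  mem : V -> V -> Prop;
  atom : V -> Prop;
  Aset : V;
  prec : V -> V -> Prop
}.

Arguments mem {z}.
Arguments atom {z}.
Arguments Aset {z}.
Arguments prec {z}.

Definition is_set {Z : ZFA_sig} (x : Z) : Prop := ~ atom x.
Definition subset {Z : ZFA_sig} (x y : Z) : Prop := forall z, mem z x -> mem z y.

Definition ZFA_axioms (Z : ZFA_sig) : Prop :=
  (forall a x : Z, atom a -> ~ mem x a) /\
  (forall x y : Z, is_set x -> is_set y ->
     (forall z, mem z x <-> mem z y) -> x = y) /\
  well_founded (@mem Z) /\
  is_set (@Aset Z) /\
  (forall a : Z, mem a Aset <-> atom a).

Definition setting (Z : ZFA_sig) : Prop :=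
  (~ exists l : list Z, forall a, mem a Aset -> In a l) /\
  (forall a : Z, mem a Aset -> prec a a) /\
  (forall a b c : Z, mem a Aset -> mem b Aset -> mem c Aset ->
     prec a b -> prec b c -> prec a c) /\
  (forall a : Z, mem a Aset ->
     exists b, mem b Aset /\ prec b a /\ ~ prec a b).

Definition pr {Z : ZFA_sig} (a : Z) : Z -> Prop :=
  fun b => mem b Aset /\ prec b a.

Definition LO_A {Z : ZFA_sig} (x : Z) : Prop :=
  is_set x /\ (exists a, mem a x) /\ (forall a, mem a x -> mem a Aset) /\
  (forall a, mem a x -> forall b, pr a b -> mem b x).

Definition LO_sub {Z : ZFA_sig} (X : Z -> Prop) (x : Z) : Prop :=
  is_set x /\ (exists y, mem y x) /\ (forall y, mem y x -> X y) /\
  (forall y z, mem y x -> X z -> is_set z -> subset z y -> mem z x).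

(* Ordinal vocabulary on a well-order (O, lt) whose least element plays the
   role of the ordinal 1. *)
Definition is_first {O : Type} (lt : O -> O -> Prop) (a : O) : Prop :=
  forall b, ~ lt b a.
Definition succ_of {O : Type} (lt : O -> O -> Prop) (b a : O) : Prop :=
  lt b a /\ forall c, lt c a -> c = b \/ lt c b.
Definition is_limit {O : Type} (lt : O -> O -> Prop) (a : O) : Prop :=
  ~ is_first lt a /\ forall b, lt b a -> exists c, lt b c /\ lt c a.

(* (O, lt) is like the class of ordinals >= 1: a nonempty strict
   well-order (well-foundedness is passed separately) without maximum. *)
Definition ordinal_like {O : Type} (lt : O -> O -> Prop) : Prop :=
  inhabited O /\
  (forall a, ~ lt a a) /\
  (forall a b c, lt a b -> lt b c -> lt a c) /\
  (forall a b, lt a b \/ a = b \/ lt b a) /\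
  (forall a, exists b, succ_of lt a b).

Definition Mstep (Z : ZFA_sig) {O : Type} (lt : O -> O -> Prop)
  (a : O) (rec : forall b, lt b a -> Z -> Prop) : Z -> Prop :=
  fun x =>
    (is_first lt a /\ LO_A x) \/
    (exists b (h : lt b a), succ_of lt b a /\ LO_sub (rec b h) x) \/
    (is_limit lt a /\ exists b (h : lt b a), rec b h x).

Definition Mlev (Z : ZFA_sig) {O : Type} (lt : O -> O -> Prop)
  (wf : well_founded lt) : O -> Z -> Prop :=
  Fix wf (fun _ => Z -> Prop) (Mstep Z lt).

Definition Mall (Z : ZFA_sig) {O : Type} (lt : O -> O -> Prop)
  (wf : well_founded lt) (x : Z) : Prop :=
  exists a, Mlev Z lt wf a x.

(* Members of M are nonempty sets while members of A are atoms, so a set in M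
   cannot meet both A and M.  The core claim, that a set y in M with y a subset
   of some x in M_d already lies in M_d, is proved by epsilon-induction on x
   and, inside it, induction on d.  First levels are settled by the
   atom/set dichotomy and limit levels by the induction on d.  At a successor
   d = g + 1, y is LO(M_e, subset) for some unrelated e; its elements lie in
   M_g, and the epsilon-induction hypothesis for them turns the downward
   closure of y inside M_e into downward closure inside M_g. *)
From Stdlib Require Import List Wellfounded.
From Stdlib Require Import Classical FunctionalExtensionality.

Section OrdinalLike.

Variables (O : Type) (lt : O -> O -> Prop).
Hypothesis HO : ordinal_like lt.

Lemma succ_of_pred_unique (a b c : O) :
  succ_of lt a c -> succ_of lt b c -> a = b.
Proof.
  destruct HO as [_ [Hirr [Htr [Htot _]]]].
  intros [Hac Ha] [Hbc Hb].
  destruct (Htot a b) as [H|[H|H]]; auto.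
  - destruct (Ha b Hbc) as [E|E]; auto. exfalso; apply (Hirr a); eauto.
  - destruct (Hb a Hac) as [E|E]; auto. exfalso; apply (Hirr a); eauto.
Qed.

Lemma succ_of_not_limit (a b : O) : succ_of lt a b -> ~ is_limit lt b.
Proof.
  destruct HO as [_ [Hirr [Htr _]]].
  intros [Hab Hpred] [_ Hlim].
  destruct (Hlim a Hab) as [c [Hac Hcb]].
  destruct (Hpred c Hcb) as [->|Hca]; [exact (Hirr a Hac)|].
  exact (Hirr a (Htr _ _ _ Hac Hca)).
Qed.

End OrdinalLike.

Section Magmatic.

Variables (Z : ZFA_sig) (O : Type) (lt : O -> O -> Prop) (wf : well_founded lt).

Local Notation M := (Mlev Z lt wf).
Local Notation Mall := (Mall Z lt wf).

Lemma Mlev_unfold (d : O) (x : Z) :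
  M d x <->
  (is_first lt d /\ LO_A x) \/
  (exists g, lt g d /\ succ_of lt g d /\ LO_sub (M g) x) \/
  (is_limit lt d /\ exists g, lt g d /\ M g x).
Proof.
  assert (Hfix : M d = Mstep Z lt d (fun g _ => M g)).
  { unfold Mlev at 1; rewrite Fix_eq; [reflexivity|].
    intros e f f' Hff'.
    replace f' with f; [reflexivity|].
    do 2 (apply functional_extensionality_dep; intro); apply Hff'. }
  rewrite Hfix; unfold Mstep.
  split; intros [H|[[g [h [H1 H2]]]|[H1 [g [h H2]]]]]; eauto 10.
Qed.

Lemma Mlev_first (one : O) (x : Z) :
  is_first lt one -> (M one x <-> LO_A x).
Proof.
  intro Hone; rewrite Mlev_unfold; split.
  - intros [[_ H]|[[g [Hg _]]|[[Hlim _] _]]]; [exact H|..].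
    + destruct (Hone g Hg).
    + destruct (Hlim Hone).
  - intro H; left; auto.
Qed.

Lemma Mlev_succ (g d : O) (x : Z) :
  ordinal_like lt -> succ_of lt g d -> (M d x <-> LO_sub (M g) x).
Proof.
  intros HO Hgd; rewrite Mlev_unfold; split.
  - intros [[Hfirst _]|[[g' [_ [Hg'd H]]]|[Hlim _]]].
    + destruct (Hfirst g (proj1 Hgd)).
    + rewrite (succ_of_pred_unique O lt HO g g' d Hgd Hg'd); exact H.
    + destruct (succ_of_not_limit O lt HO g d Hgd Hlim).
  - intro H; right; left; exists g; split; [apply Hgd|auto].
Qed.

Lemma Mall_cases (y : Z) :
  Mall y -> LO_A y \/ exists e, LO_sub (M e) y.
Proof.
  intros [d Hd]; revert Hd.
  induction d as [d IH] using (well_founded_ind wf).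
  rewrite Mlev_unfold.
  intros [[_ H]|[[g [_ [_ H]]]|[_ [g [Hg H]]]]]; eauto.
Qed.

Lemma Mall_nonempty_set (y : Z) : Mall y -> is_set y /\ exists z, mem z y.
Proof.
  intro Hy.
  destruct (Mall_cases y Hy) as [[? [? _]]|[e [? [? _]]]]; auto.
Qed.

Hypothesis HZ : ZFA_axioms Z.

Lemma Mall_notin_Aset (z : Z) : Mall z -> ~ mem z Aset.
Proof.
  destruct HZ as [_ [_ [_ [_ HA]]]].
  intros Hz HzA.
  exact (proj1 (Mall_nonempty_set z Hz) (proj1 (HA z) HzA)).
Qed.

Definition Mlev_downward_closed (x : Z) : Prop :=
  forall d, M d x -> forall y, is_set y -> subset y x -> Mall y -> M d y.

Lemma LO_sub_of_Mall_elems (g : O) (y : Z) :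
  is_set y -> (forall z, mem z y -> M g z) -> Mall y ->
  (forall z, mem z y -> Mlev_downward_closed z) ->
  LO_sub (M g) y.
Proof.
  intros Hys Hyg Hy Hclosed.
  destruct (Mall_cases y Hy) as [[_ [[z Hz] [HyA _]]]|[e [_ [Hne [Hye Hdown]]]]].
  - destruct (Mall_notin_Aset z (ex_intro _ g (Hyg z Hz)) (HyA z Hz)).
  - split; [exact Hys|]; split; [exact Hne|]; split; [exact Hyg|].
    intros z' z Hz' Hzg Hzs Hzz'.
    apply (Hdown z' z Hz'); [|exact Hzs|exact Hzz'].
    exact (Hclosed z' Hz' e (Hye z' Hz') z Hzs Hzz' (ex_intro _ g Hzg)).
Qed.

Lemma Mlev_downward_closed_all (x : Z) : Mlev_downward_closed x.
Proof.
  destruct HZ as [_ [_ [Hwf _]]].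
  induction x as [x IHx] using (well_founded_ind Hwf).
  intro d; induction d as [d IHd] using (well_founded_ind wf).
  intros Hx y Hys Hyx Hy; rewrite Mlev_unfold in Hx |- *.
  destruct Hx as [[Hfirst HxA]|[[g [Hgd [Hsucc HxLO]]]|[Hlim [g [Hgd Hxg]]]]].
  - left; split; [exact Hfirst|].
    destruct (Mall_cases y Hy) as [H|[e [_ [[z Hz] [Hze _]]]]]; [exact H|].
    destruct (Mall_notin_Aset z (ex_intro _ e (Hze z Hz))).
    exact (proj1 (proj2 (proj2 HxA)) z (Hyx z Hz)).
  - right; left; exists g; split; [exact Hgd|]; split; [exact Hsucc|].
    destruct HxLO as [_ [_ [Hxg _]]].
    apply LO_sub_of_Mall_elems; auto.
  - right; right; split; [exact Hlim|]; exists g; split; [exact Hgd|].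
    exact (IHd g Hgd Hxg y Hys Hyx Hy).
Qed.

Lemma LO_sub_of_Mall (g : O) (y : Z) :
  is_set y -> (forall z, mem z y -> M g z) -> Mall y -> LO_sub (M g) y.
Proof.
  intros Hys Hyg Hy.
  apply LO_sub_of_Mall_elems; auto.
  intros; apply Mlev_downward_closed_all.
Qed.

Lemma powerset_Mlev (d : O) (x : Z) :
  M d x ->
  (forall y, is_set y -> subset y x -> Mall y -> M d y) /\
  (forall y, (is_set y /\ subset y x /\ Mall y) <->
             (is_set y /\ subset y x /\ M d y)).
Proof.
  intro Hx.
  assert (Hsub := Mlev_downward_closed_all x d Hx).
  split; [exact Hsub|].
  intro y; split; intros [Hys [Hyx Hy]]; repeat split; auto.
  exists d; exact Hy.
Qed.

Lemma Aset_Mlev_first (one : O) :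
  setting Z -> is_first lt one -> M one Aset.
Proof.
  destruct HZ as [_ [_ [_ [HAs _]]]].
  intros [Hinf _] Hone.
  apply (Mlev_first one Aset Hone).
  split; [exact HAs|]; split; [|split; [auto|intros a _ b [Hb _]; exact Hb]].
  apply NNPP; intro Hempty; apply Hinf.
  exists nil; intros a Ha; destruct (Hempty (ex_intro _ a Ha)).
Qed.

End Magmatic.

Theorem proposition4p5 (Z : ZFA_sig) (O : Type) (lt : O -> O -> Prop)
  (wf : well_founded lt) :
  ZFA_axioms Z -> setting Z -> ordinal_like lt ->
  (* (i) *)
  (forall one : O, is_first lt one ->
     (forall x : Z, Mlev Z lt wf one x ->
        (forall y : Z, is_set y -> subset y x -> Mall Z lt wf y ->
           Mlev Z lt wf one y) /\
        (forall y : Z,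
           (is_set y /\ subset y x /\ Mall Z lt wf y) <->
           (is_set y /\ subset y x /\ Mlev Z lt wf one y))) /\
     (forall y : Z,
        (is_set y /\ subset y Aset /\ Mall Z lt wf y) <-> Mlev Z lt wf one y)) /\
  (* (ii) *)
  (forall alpha beta : O, succ_of lt alpha beta ->
     (forall x : Z, Mlev Z lt wf beta x ->
        (forall y : Z, is_set y -> subset y x -> Mall Z lt wf y ->
           Mlev Z lt wf beta y) /\
        (forall y : Z,
           (is_set y /\ subset y x /\ Mall Z lt wf y) <->
           (is_set y /\ subset y x /\ Mlev Z lt wf beta y))) /\
     (forall y : Z,
        (is_set y /\ (forall z, mem z y -> Mlev Z lt wf alpha z) /\
         Mall Z lt wf y) <-> Mlev Z lt wf beta y)).
Proof.
  intros HZ HS HO; split.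
  - intros one Hone; split; [exact (powerset_Mlev Z O lt wf HZ one)|].
    intro y; split.
    + intros [Hys [HyA Hy]].
      apply (proj1 (powerset_Mlev Z O lt wf HZ one Aset
                      (Aset_Mlev_first Z O lt wf HZ one HS Hone))); assumption.
    + intro Hy.
      destruct (proj1 (Mlev_first Z O lt wf one y Hone) Hy) as [Hys [_ [HyA _]]].
      split; [exact Hys|]; split; [exact HyA|]; exists one; exact Hy.
  - intros alpha beta Hab; split; [exact (powerset_Mlev Z O lt wf HZ beta)|].
    intro y; rewrite (Mlev_succ Z O lt wf alpha beta y HO Hab); split.
    + intros [Hys [Hyalpha Hy]]; exact (LO_sub_of_Mall Z O lt wf HZ alpha y Hys Hyalpha Hy).
    + intros HyLO; split; [apply HyLO|]; split; [apply HyLO|].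
      exists beta; apply (Mlev_succ Z O lt wf alpha beta y HO Hab); exact HyLO.
Qed.
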